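(* Let $n\ge1$, suppose $\mathcal M$ is injective on $\Omega$, and let $W=(w_1,u_1,\dots,w_n,u_n,\sigma)\in\Omega$ and $M=\mathcal M(W)$. Define $$g(u;W)=\Delta_{2n+1}(u,\sigma)-\sum_{j=0}^{2n}a_j(M)\Delta_j(u,\sigma).$$ Then there is a real number $\tilde u(W)$ such that $$g(u;W)=(u-u_1)^2\cdots(u-u_n)^2(u-\tilde u(W)).$$
   Context: Let $\mathcal K:\mathbb R\to[0,\infty)$ be a kernel with $\mathfrak m_j:=\int_{\mathbb R}\xi^j\mathcal K(\xi)\,d\xi<\infty$ for all $j$; normalized: $\mathfrak m_0=1,\mathfrak m_1=0,\mathfrak m_2=1$. Let $\Delta_j(u,\sigma)=\int\xi^j\frac1\sigma\mathcal K(\frac{\xi-u}{\sigma})d\xi=\sum_{k=0}^j\binom jk\mathfrak m_k\sigma^ku^{j-k}$, a polynomial in $u$. For $W=(w_1,u_1,\dots,w_n,u_n,\sigma)$, $\mathcal M(W)=(M_0,\dots,M_{2n})^T$ with $M_j=\sum_{i=1}^nw_i\Delta_j(u_i,\sigma)$; $\Omega=\{W:w_i>0\ \forall i,\ u_1<\dots<u_n,\ \sigma>0\}$. On $\mathcal M(\Omega)$, $\mathcal M_{2n+1}(M)=\sum_iw_i\Delta_{2n+1}(u_i,\sigma)$ with $W=\mathcal M^{-1}(M)$, and $a_j(M)=\partial\mathcal M_{2n+1}/\partial M_j$, $j=0,\dots,2n$. *)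

From HB Require Import structures.
From mathcomp Require Import all_boot all_order all_algebra.
From mathcomp Require Import all_classical all_reals all_analysis.
Set Implicit Arguments.
Unset Strict Implicit.
Unset Printing Implicit Defensive.
Import Order.TTheory GRing.Theory Num.Theory.
Import numFieldNormedType.Exports.

Local Open Scope classical_set_scope.
Local Open Scope ring_scope.

Section Defs.
Variable R : realType.

Definition moment (K : R -> R) (j : nat) : R :=
  \int[@lebesgue_measure R]_(x in [set: R]) (x ^+ j * K x).

Definition Delta (K : R -> R) (j : nat) (u s : R) : R :=
  \sum_(k < j.+1) ('C(j, k))%:R * moment K k * s ^+ k * u ^+ (j - k).

(* Parameters W = (w_1,u_1,...,w_n,u_n,sigma) are represented by (w, u, s). *)
Definition Mj (K : R -> R) (n : nat) (w u : 'I_n -> R) (s : R) (j : nat) : R :=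
  \sum_(i < n) w i * Delta K j (u i) s.

Definition Mvec (K : R -> R) (n : nat) (w u : 'I_n -> R) (s : R)
  : 'rV[R]_((2 * n).+1) :=
  \row_(j < (2 * n).+1) Mj K w u s j.

Definition inOmega (n : nat) (w u : 'I_n -> R) (s : R) : Prop :=
  (forall i, 0 < w i) /\ (forall i j : 'I_n, (i < j)%N -> u i < u j) /\ 0 < s.

Definition Minj_on_Omega (K : R -> R) (n : nat) : Prop :=
  forall (w u w' u' : 'I_n -> R) (s s' : R),
    inOmega w u s -> inOmega w' u' s' ->
    Mvec K w u s = Mvec K w' u' s' -> w = w' /\ u = u' /\ s = s'.

(* M_{2n+1} on M(Omega):  M |-> sum_i w_i Delta_{2n+1}(u_i, sigma) with
   W = M^{-1}(M); (arbitrary value 0 outside M(Omega)). *)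
Definition Mnext (K : R -> R) (n : nat) (m : 'rV[R]_((2 * n).+1)) : R :=
  match pselect (exists p : ('I_n -> R) * ('I_n -> R) * R,
                   inOmega p.1.1 p.1.2 p.2 /\ Mvec K p.1.1 p.1.2 p.2 = m) with
  | left H => let p := projT1 (cid H) in Mj K p.1.1 p.1.2 p.2 (2 * n).+1
  | right _ => 0
  end.

(* a_j(M) = partial derivative of M_{2n+1} with respect to M_j *)
Definition acoef (K : R -> R) (n : nat) (m : 'rV[R]_((2 * n).+1))
  (j : 'I_((2 * n).+1)) : R :=
  derive (@Mnext K n) m (delta_mx 0 j).

Definition gfun (K : R -> R) (n : nat) (w u : 'I_n -> R) (s : R) (x : R) : R :=
  Delta K (2 * n).+1 x s
  - \sum_(j < (2 * n).+1) acoef K (Mvec K w u s) j * Delta K j x s.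

End Defs.
Arguments Mnext {R} K n m.
Arguments acoef {R} K {n} m j.

From HB Require Import structures.
From mathcomp Require Import all_boot all_order all_algebra.
From mathcomp Require Import all_classical all_reals all_analysis.
From mathcomp Require Import zify ring lra.
Import Order.TTheory GRing.Theory Num.Theory.
Import numFieldNormedType.Exports.
Local Open Scope classical_set_scope.
Local Open Scope ring_scope.

(* The polynomial g(.; W) is monic of degree 2n+1, since each Delta_j(., sigma)
   is monic of degree j.  On Omega, M_{2n+1}(M(W)) = sum_i w_i Delta_{2n+1}(u_i,
   sigma); differentiating this identity along the curves in Omega that move a
   single w_i, resp. a single u_i, the chain rule gives
   Delta_{2n+1}(u_i) = sum_j a_j Delta_j(u_i) and the same identity for the
   derivatives in u, i.e. g and g' both vanish at every u_i.  A monic polynomial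
   of degree 2n+1 with the n distinct double roots u_i is
   (X - u_1)^2 ... (X - u_n)^2 (X - c). *)

Set Implicit Arguments.
Unset Strict Implicit.
Unset Printing Implicit Defensive.

Section DoubleRoots.
Variables (F : fieldType) (n : nat) (u : 'I_n -> F).
Hypothesis u_inj : injective u.

Let P : {poly F} := \prod_i ('X - (u i)%:P).

Lemma prod_XsubC_dvdp (q : {poly F}) : (forall i, root q (u i)) -> P %| q.
Proof.
move=> rq; rewrite /P -big_enum -(big_map u predT (fun z => 'X - z%:P)).
apply: uniq_roots_dvdp; last by rewrite uniq_rootsE map_inj_uniq ?enum_uniq.
by apply/allP => _ /mapP [i _ ->].
Qed.

Lemma prod_XsubC_sqr_dvdp (G : {poly F}) :
  (forall i, root G (u i)) -> (forall i, root G^`() (u i)) -> P ^+ 2 %| G.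
Proof.
move=> r0 r1; have [Q GE] := dvdpP _ _ (prod_XsubC_dvdp r0).
have P_root i : P.[u i] = 0.
  by rewrite horner_prod (bigD1 i) //= hornerXsubC subrr mul0r.
have P'_simple i : P^`().[u i] != 0.
  rewrite /P (bigD1 i) //= derivM derivXsubC mul1r hornerD hornerM.
  rewrite hornerXsubC subrr mul0r addr0 horner_prod.
  apply/prodf_neq0 => j ji; rewrite hornerXsubC subr_eq0.
  by apply: contra ji => /eqP /u_inj ->.
have rQ i : root Q (u i).
  have := r1 i; rewrite /root GE derivM hornerD !hornerM P_root mulr0 add0r.
  by rewrite mulf_eq0 (negbTE (P'_simple i)) orbF.
have [Q' QE] := dvdpP _ _ (prod_XsubC_dvdp rQ).
by apply/dvdpP; exists Q'; rewrite GE QE expr2 mulrA.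
Qed.

Lemma monic_size2E (Q : {poly F}) :
  Q \is monic -> size Q = 2 -> Q = 'X - (- Q`_0)%:P.
Proof.
move=> mQ sQ; apply/polyP => k; rewrite coefB coefX coefC.
case: k => [|[|k]] /=; first by rewrite sub0r opprK.
  by move: mQ; rewrite monicE /lead_coef sQ => /eqP ->; rewrite subr0.
by rewrite subr0 nth_default // sQ.
Qed.

Lemma monic_double_roots_factor (G : {poly F}) :
  G \is monic -> size G = (2 * n).+2 ->
  (forall i, root G (u i)) -> (forall i, root G^`() (u i)) ->
  exists c, G = P ^+ 2 * ('X - c%:P).
Proof.
move=> mG sG r0 r1; have [Q GE] := dvdpP _ _ (prod_XsubC_sqr_dvdp r0 r1).
have mP2 : P ^+ 2 \is monic by rewrite monic_exp ?monic_prod_XsubC.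
have sP2 : size (P ^+ 2) = (2 * n).+1.
  rewrite expr2 size_monicM ?monic_neq0 ?monic_prod_XsubC //.
  by rewrite /P -big_enum size_prod_XsubC size_enum_ord; lia.
have mQ : Q \is monic by rewrite -(monicMr _ mP2) -GE.
have sQ : size Q = 2.
  by move: sG; rewrite GE size_Mmonic ?monic_neq0 // sP2; lia.
by exists (- Q`_0); rewrite GE mulrC -monic_size2E.
Qed.

End DoubleRoots.

Lemma derive_comp_row (R : numFieldType) k (F : 'rV[R]_k -> R)
    (h : 'I_k -> R -> R) (t : R) :
  (forall j, derivable (h j) t 1) -> differentiable F (\row_j h j t) ->
  'D_1 (fun x => F (\row_j h j x)) t =
  \sum_j 'D_1 (h j) t * 'D_(delta_mx 0 j) F (\row_j h j t).
Proof.
move=> dh dF; pose r x : 'rV[R]_k := \row_j h j x.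
have rE : r = \sum_j (fun x => h j x *: (delta_mx 0 j : 'rV[R]_k)).
  apply/funext => x; rewrite fct_sumE {1}(row_sum_delta (r x)).
  by apply: eq_bigr => j _; rewrite mxE.
have dterm j : differentiable (fun x => h j x *: (delta_mx 0 j : 'rV[R]_k)) t.
  by apply: differentiableZl; apply/derivable1_diffP.
have dr : differentiable r t by rewrite rE; apply: differentiable_sum.
have r'E : 'd r t 1 = \sum_j 'D_1 (h j) t *: (delta_mx 0 j : 'rV[R]_k).
  rewrite -deriveE // rE derive_sum; last by move=> j; apply: diff_derivable.
  apply: eq_bigr => j _; rewrite deriveE // diffZl /=; last exact/derivable1_diffP.
  by rewrite -deriveE //; apply/derivable1_diffP.
rewrite deriveE; last exact: differentiable_comp.
rewrite diff_comp // /= r'E linear_sum.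
by apply: eq_bigr => j _; rewrite linearZ /= (deriveE _ dF).
Qed.

Lemma size_sum_scale_leq (R : nzRingType) m I (r : seq I) (a : I -> R)
    (p : I -> {poly R}) :
  (forall i, (size (p i) <= m)%N) -> (size (\sum_(i <- r) a i *: p i)%R <= m)%N.
Proof.
move=> sp; apply: (big_ind (fun q : {poly R} => size q <= m)%N).
- by rewrite size_poly0.
- by move=> p1 p2 s1 s2; rewrite (leq_trans (size_polyD _ _)) // geq_max s1.
- by move=> i _; rewrite (leq_trans (size_scale_leq _ _)).
Qed.

Section KernelMoments.
Variables (R : realType) (K : R -> R).

Definition DeltaP (j : nat) (s : R) : {poly R} :=
  \sum_(k < j.+1) ('C(j, k)%:R * moment K k * s ^+ k) *: 'X^(j - k).

Lemma hornerDeltaP j s x : (DeltaP j s).[x] = Delta K j x s.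
Proof.
rewrite horner_sum; apply: eq_bigr => k _.
by rewrite hornerZ hornerXn.
Qed.

Lemma size_DeltaP_leq j s : (size (DeltaP j s) <= j.+1)%N.
Proof.
apply: size_sum_scale_leq => k.
by rewrite size_polyXn ltnS leq_subr.
Qed.

Hypothesis moment0 : moment K 0 = 1.

Lemma DeltaP_XnD j s :
  exists2 E : {poly R}, DeltaP j s = 'X^j + E & (size E <= j)%N.
Proof.
rewrite /DeltaP big_ord_recl /= bin0 moment0 expr0 !mulr1 subn0 scale1r.
eexists; first reflexivity.
apply: size_sum_scale_leq => k; rewrite size_polyXn.
by case: j k => [|j] [k hk] //=; rewrite subSS ltnS leq_subr.
Qed.

Variable n : nat.

Definition gpoly (a : 'I_(2 * n).+1 -> R) (s : R) : {poly R} :=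
  DeltaP (2 * n).+1 s - \sum_j a j *: DeltaP j s.

Lemma gpoly_XnD a s :
  exists2 E : {poly R},
    gpoly a s = 'X^((2 * n).+1) + E & (size E <= (2 * n).+1)%N.
Proof.
rewrite /gpoly; have [E -> sE] := DeltaP_XnD (2 * n).+1 s.
exists (E - \sum_j a j *: DeltaP j s); first by rewrite addrA.
rewrite (leq_trans (size_polyD _ _)) // geq_max sE size_polyN /=.
apply: size_sum_scale_leq => j.
exact: leq_trans (size_DeltaP_leq j s) (ltn_ord j).
Qed.

Lemma gpoly_monic a s : gpoly a s \is monic.
Proof.
have [E -> sE] := gpoly_XnD a s.
by rewrite monicE lead_coefDl ?size_polyXn ?lead_coefXn.
Qed.

Lemma size_gpoly a s : size (gpoly a s) = (2 * n).+2.
Proof.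
have [E -> sE] := gpoly_XnD a s.
by rewrite size_polyDl ?size_polyXn.
Qed.

End KernelMoments.

Section FirstOrderConditions.
Variables (R : realType) (K : R -> R) (n : nat).
Hypothesis Minj : Minj_on_Omega K n.

Lemma Mnext_Mvec w u s :
  inOmega w u s -> Mnext K n (Mvec K w u s) = Mj K w u s (2 * n).+1.
Proof.
move=> hW; rewrite /Mnext; case: pselect => [ex|]; last first.
  by case; exists (w, u, s).
case: (cid ex) => [[[w' u'] s'] /= [hW' eqM]].
by have [-> [-> ->]] := Minj hW' hW eqM.
Qed.

Lemma Mnext_first_order (cw cu : R -> 'I_n -> R) s (Q : nat -> {poly R}) :
  (\forall t \near 0, inOmega (cw t) (cu t) s) ->
  (forall j t, Mj K (cw t) (cu t) s j = (Q j).[t]) ->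
  differentiable (Mnext K n) (Mvec K (cw 0) (cu 0) s) ->
  (Q (2 * n).+1)^`().[0] =
    \sum_(j < (2 * n).+1) (Q j)^`().[0] * acoef K (Mvec K (cw 0) (cu 0) s) j.
Proof.
move=> hOm hQ dM.
have rowQ t : \row_(j < (2 * n).+1) (Q j).[t] = Mvec K (cw t) (cu t) s.
  by apply/rowP => j; rewrite !mxE hQ.
have D_horner (p : {poly R}) : 'D_1 (horner p) 0 = p^`().[0].
  by rewrite -derive1E -derivE.
rewrite -D_horner.
rewrite (near_eq_derive (g := fun t => Mnext K n (\row_j (Q j).[t]))); last first.
  by apply: filterS hOm => t hOm_t; rewrite rowQ Mnext_Mvec // hQ.
rewrite derive_comp_row ?rowQ //.
by apply: eq_bigr => j _; rewrite D_horner.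
Qed.

End FirstOrderConditions.

Definition perturb (R : nmodType) n (f : 'I_n -> R) (i : 'I_n) (t : R) :
  'I_n -> R := fun k => f k + t *+ (k == i).

Lemma perturb0 (R : nmodType) n (f : 'I_n -> R) i : perturb f i 0 = f.
Proof. by apply/funext => k; rewrite /perturb mul0rn addr0. Qed.

Section Perturbations.
Variables (R : realType) (K : R -> R) (n : nat).
Variables (w u : 'I_n -> R) (s : R).
Hypothesis hW : inOmega w u s.

Lemma inOmega_injective : injective u.
Proof.
have [_ [u_lt _]] := hW.
move=> i j uij; apply: val_inj.
by case: (ltngtP i j) => // ij; have := u_lt _ _ ij; rewrite uij ltxx.
Qed.

Lemma near_inOmega_perturb_weight i :
  \forall t \near 0, inOmega (perturb w i t) u s.
Proof.
have [w_gt0 [u_lt s_gt0]] := hW.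
apply: filterS (nbhs0_lt (w_gt0 i)) => t; rewrite ltr_norml => /andP [t_gt _].
split=> // k; rewrite /perturb; case: eqP => [->|_]; last by rewrite addr0.
by rewrite mulr1n; lra.
Qed.

Lemma near_inOmega_perturb_location i :
  \forall t \near 0, inOmega w (perturb u i t) s.
Proof.
have [w_gt0 [u_lt s_gt0]] := hW.
have gaps : \forall t \near (0 : R), forall c d : 'I_n,
    (c < d)%N -> `|t| < u d - u c.
  apply: (@filter_forall R _ _ (nbhs (0 : R)) _) => c.
  apply: (@filter_forall R _ _ (nbhs (0 : R)) _) => d.
  have [cd|dc] := ltnP c d; last by apply: filterE => t cd; lia.
  have gap_gt0 : 0 < u d - u c by rewrite subr_gt0 u_lt.
  by apply: filterS (nbhs0_lt gap_gt0) => t + _.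
apply: filterS gaps => t gaps; split=> //; split=> // c d cd.
have := gaps c d cd; have := u_lt c d cd; rewrite ltr_norml /perturb.
by case: eqP; case: eqP => _ _; rewrite ?mulr1n ?mulr0n ?addr0; lra.
Qed.

Lemma Mj_perturb_weight i j t :
  Mj K (perturb w i t) u s j = Mj K w u s j + t * Delta K j (u i) s.
Proof.
rewrite /Mj /perturb; under eq_bigr do rewrite mulrDl; rewrite big_split /=.
congr (_ + _); rewrite (bigD1 i) //= eqxx mulr1n big1 ?addr0 // => k /negbTE ->.
by rewrite mul0r.
Qed.

Lemma Mj_perturb_location i j t :
  Mj K w (perturb u i t) s j =
    Mj K w u s j + w i * (Delta K j (u i + t) s - Delta K j (u i) s).
Proof.
rewrite /Mj /perturb (bigD1 i) //= [in RHS](bigD1 i) //= eqxx mulr1n.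
rewrite (eq_bigr (fun k => w k * Delta K j (u k) s)) => [|k /negbTE ->].
  by ring.
by rewrite addr0.
Qed.

End Perturbations.

Section CriticalPolynomial.
Variables (R : realType) (K : R -> R) (n : nat).
Hypothesis Minj : Minj_on_Omega K n.
Variables (w u : 'I_n -> R) (s : R).
Hypothesis hW : inOmega w u s.
Hypothesis Mnext_diff : differentiable (Mnext K n) (Mvec K w u s).

Let a := acoef K (Mvec K w u s).

Lemma gfunE x : gfun K w u s x = (gpoly K a s).[x].
Proof.
rewrite /gfun /gpoly hornerD hornerN hornerDeltaP horner_sum; congr (_ - _).
by apply: eq_bigr => j _; rewrite hornerZ hornerDeltaP.
Qed.

Lemma root_gpoly i : root (gpoly K a s) (u i).
Proof.
pose Q j := (Mj K w u s j)%:P + Delta K j (u i) s *: 'X.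
have Q'0 j : (Q j)^`().[0] = Delta K j (u i) s.
  by rewrite derivD derivC derivZ derivX add0r hornerZ hornerC mulr1.
have Q_eval j t : Mj K (perturb w i t) u s j = (Q j).[t].
  by rewrite Mj_perturb_weight hornerD hornerC hornerZ hornerX mulrC.
have := Mnext_first_order Minj (near_inOmega_perturb_weight hW i) Q_eval.
rewrite perturb0 Q'0 => /(_ Mnext_diff) a_eq.
rewrite /root /gpoly hornerD hornerN hornerDeltaP a_eq horner_sum subr_eq0.
by apply/eqP/eq_bigr => j _; rewrite hornerZ hornerDeltaP Q'0 mulrC.
Qed.

Lemma root_deriv_gpoly i : root (gpoly K a s)^`() (u i).
Proof.
pose Q j := (Mj K w u s j - w i * Delta K j (u i) s)%:P
  + w i *: (DeltaP K j s \Po ('X + (u i)%:P)).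
have Q'0 j : (Q j)^`().[0] = w i * (DeltaP K j s)^`().[u i].
  rewrite derivD derivC derivZ deriv_comp derivD derivX derivC add0r addr0 mulr1.
  by rewrite hornerZ horner_comp hornerD hornerX hornerC add0r.
have Q_eval j t : Mj K w (perturb u i t) s j = (Q j).[t].
  rewrite Mj_perturb_location hornerD hornerC hornerZ horner_comp.
  by rewrite hornerD hornerX hornerC hornerDeltaP [t + _]addrC; ring.
have := Mnext_first_order Minj (near_inOmega_perturb_location hW i) Q_eval.
rewrite perturb0 Q'0 => /(_ Mnext_diff) a_eq.
have [w_gt0 _] := hW; have w_neq0 : w i != 0 by rewrite gt_eqF.
rewrite /root /gpoly derivB [X in _ - X]raddf_sum hornerD hornerN horner_sum.
apply/eqP/(mulfI w_neq0); rewrite mulr0 mulrBr a_eq mulr_sumr; apply/eqP.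
rewrite subr_eq0; apply/eqP/eq_bigr => j _.
by rewrite Q'0 /= derivZ hornerZ mulrCA mulrC.
Qed.

End CriticalPolynomial.

Unset Implicit Arguments.

Theorem proposition4p1 (R : realType) (K : R -> R) (n : nat)
  (hK0 : forall x, 0 <= K x)
  (hKint : forall j : nat,
     (@lebesgue_measure R).-integrable [set: R] (fun x => (x ^+ j * K x)%:E))
  (hm0 : moment K 0 = 1) (hm1 : moment K 1 = 0) (hm2 : moment K 2 = 1)
  (hn : (1 <= n)%N)
  (hinj : Minj_on_Omega K n)
  (w u : 'I_n -> R) (s : R) (hW : inOmega w u s)
  (hdiff : differentiable (Mnext K n) (Mvec K w u s)) :
  exists ut : R, forall x : R,
    gfun K w u s x = (\prod_(i < n) (x - u i) ^+ 2) * (x - ut).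
Proof.
have [ut gE] := monic_double_roots_factor (inOmega_injective hW)
  (gpoly_monic hm0 _ _) (size_gpoly hm0 _ _)
  (root_gpoly hinj hW hdiff) (root_deriv_gpoly hinj hW hdiff).
exists ut => x; rewrite gfunE gE hornerM horner_exp horner_prod hornerXsubC.
by rewrite -prodrXl; under eq_bigr do rewrite hornerXsubC.
Qed.
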